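(* Let $T$ be a reduced linear trellis of length $n$, let $\boldsymbol{\alpha}^1,\dots,\boldsymbol{\alpha}^r\in\mathbb{F}^n$ and let $(a_1,l_1),\dots,(a_r,l_r)$ be spans with $0\le l_i\le n$. Then $T\simeq\bigotimes_{i=1}^r\boldsymbol{\alpha}^i|(a_i,l_i)$ if and only if there exist $\mathbf{v}^1,\dots,\mathbf{v}^r\in\prod_iV_i(T)$ such that $\{(\mathbf{v}^i,\boldsymbol{\alpha}^i)\}_{i=1,\dots,r}$ is a product basis of $T$ and each cycle $(\mathbf{v}^i,\boldsymbol{\alpha}^i)$ has minimum span $(a_i,l_i)$.
   Context: Let $\mathbb{F}$ be a finite field and $n\ge1$; indices are taken in $\mathbb{Z}_n$. A trellis $T$ of length $n$ over $\mathbb{F}$ consists of pairwise disjoint finite vertex sets $V_i(T)$, $i\in\mathbb{Z}_n$, and edge sets $E_i(T)\subseteq V_i(T)\times\mathbb{F}\times V_{i+1}(T)$; $(v,\alpha,w)\in E_i(T)$ is an edge from $v$ to $w$ with label $\alpha$ at time index $i$. Every trellis is assumed trim (each vertex has an outgoing and an incoming edge). $T$ is linear if every $V_i(T)$ is an $\mathbb{F}$-vector space and every $E_i(T)$ a subspace. A cycle is a closed path $v_0\alpha_0v_1\cdots\alpha_{n-1}v_n$, $v_n=v_0\in V_0(T)$, of length $n$, identified with $(\mathbf{v},\boldsymbol{\alpha})\in\prod_{i}V_i(T)\times\mathbb{F}^n$; $\mathbb{S}(T)$ is the set of cycles. $T$ is reduced if every edge lies on some cycle. Isomorphisms: for trellises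 of the same length, an isomorphism $f:T\to T'$ is a family of bijections $f_i:V_i(T)\to V_i(T')$ with $(v,\alpha,w)\in E_i(T)\iff(f_i(v),\alpha,f_{i+1}(w))\in E_i(T')$; if $T,T'$ are linear and all $f_i$ linear, $f$ is a linear isomorphism, written $T\simeq T'$. Spans: for $a\in\mathbb{Z}_n$, $0\le l\le n-1$, $[a,a+l]=\{a,\dots,a+l\}\subseteq\mathbb{Z}_n$, $(a,a+l]=[a,a+l]\setminus\{a\}$; the pair $(a,l)$ is a span; degenerate spans are $\emptyset$ (length $-1$) and $\mathbb{Z}_n$ (length $n$, written $(a,n)$). Partial order: $(a_1,l_1)\le(a_2,l_2)$ iff ($l_1\le l_2<n-1$ and $[a_1,a_1+l_1]\subseteq[a_2,a_2+l_2]$) or ($l_2=n-1$ and $(a_1,a_1+l_1]\subseteq(a_2,a_2+l_2]$) or $l_1=-1$ or $l_2=n$. A vector $\boldsymbol{\alpha}\in\mathbb{F}^n$ has span $(a,l)$ ($0\le l\le n-1$) if its support lies in $[a,a+l]$; $\mathbb{Z}_n$ is a span of every vector. A nondegenerate $(a,l)$ is a span of a cycle $(\mathbf{v},\boldsymbol{\alpha})$ if $\{i:v_i\ne0\}\subseteq(a,a+l]$ and $\{i:\alpha_i\ne0\}\subseteq[a,a+l]$; $\emptyset$ is a span only of the zero cycle, $\mathbb{Z}_n$ of every cycle. The minimum span of a cycle is a span of it that is $\le$ every other span of it (when it exists). $\mathbb{S}_{\mathfrak{s}}(T)$ is the subspace of cycles having span $\mathfrak{s}$. A product basis of $T$ is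 a basis $\mathcal{B}$ of $\mathbb{S}(T)$ such that $\mathcal{B}\cap\mathbb{S}_{\mathfrak{s}}(T)$ spans $\mathbb{S}_{\mathfrak{s}}(T)$ for every span $\mathfrak{s}$. Elementary trellises and products: for $\boldsymbol{\alpha}\in\mathbb{F}^n$ with span $(a,l)$, $0\le l\le n$, the elementary trellis $\boldsymbol{\alpha}|(a,l)$ has $V_i=\mathbb{F}$ for $i\in(a,a+l]$ (for $l=n$ this is all of $\mathbb{Z}_n$), $V_i=0$ otherwise, and $E_i=\langle(u_i,\alpha_i,u_{i+1})\rangle$ where $u_i=1$ if $i\in(a,a+l]$ and $u_i=0$ otherwise. The product $T\otimes T'$ has $V_i=V_i(T)\times V_i(T')$ and $E_i=\{((v,v'),\alpha+\alpha',(w,w')):(v,\alpha,w)\in E_i(T),(v',\alpha',w')\in E_i(T')\}$. Convention: in a product of elementary trellises at most one factor has span $(a,0)$ for each $a\in\mathbb{Z}_n$. *)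

From HB Require Import structures.
From mathcomp Require Import all_boot all_order all_algebra.
Unset Printing Implicit Defensive.
Import GRing.Theory.
Local Open Scope ring_scope.

(* Time indices are 'I_n with cyclic successor ordS (i.e. Z_n).
   Vertex spaces of linear trellises are represented as F^(d_i) = 'rV[F]_(d_i);
   every finite F-vector space is linearly isomorphic to such a space and all
   notions below are invariant under linear isomorphism. *)
Record trellis (F : finFieldType) (n : nat) := Trellis {
  vdim : 'I_n -> nat;
  edges : forall i : 'I_n,
      {set ('rV[F]_(vdim i) * F * 'rV[F]_(vdim (ordS i)))%type}
}.

Arguments Trellis {F n}.
Arguments vdim {F n}.
Arguments edges {F n}.

Section Trellis.
Variables (F : finFieldType) (n : nat).

(* [a, a+hi] restricted to offsets j with lo <= j <= hi, i.e.
   ival a 0 l = [a,a+l]  and  ival a 1 l = (a,a+l]  (subsets of Z_n). *)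
Definition ival (a : 'I_n) (lo hi : nat) : {set 'I_n} :=
  [set i : 'I_n | [exists j : 'I_hi.+1, (lo <= j)%N && (val i == (a + j) %% n)%N]].

Definition linear_trellis (T : trellis F n) : Prop :=
  forall i : 'I_n,
    (0, 0, 0) \in edges T i /\
    forall (c : F) x1 al1 y1 x2 al2 y2,
      (x1, al1, y1) \in edges T i -> (x2, al2, y2) \in edges T i ->
      (c *: x1 + x2, c * al1 + al2, c *: y1 + y2) \in edges T i.

Definition trim (T : trellis F n) : Prop :=
  (forall (i : 'I_n) (v : 'rV[F]_(vdim T i)),
      exists al w, (v, al, w) \in edges T i) /\
  (forall (i : 'I_n) (w : 'rV[F]_(vdim T (ordS i))),
      exists v al, (v, al, w) \in edges T i).

Definition is_cycle (T : trellis F n) (v : forall i : 'I_n, 'rV[F]_(vdim T i))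
    (al : 'I_n -> F) : Prop :=
  forall i : 'I_n, (v i, al i, v (ordS i)) \in edges T i.

Definition reduced (T : trellis F n) : Prop :=
  forall (i : 'I_n) e, e \in edges T i ->
    exists v al, is_cycle T v al /\ (v i, al i, v (ordS i)) = e.

(* Spans: SpEmpty is the empty span (length -1); Sp a l with l <= n-1 is (a,l);
   Sp a n is the full span Z_n, written (a,n). *)
Inductive span := SpEmpty | Sp of 'I_n & nat.

Definition valid_span (s : span) : bool :=
  if s is Sp _ l then (l <= n)%N else true.

Definition span_le (s1 s2 : span) : bool :=
  match s1, s2 with
  | SpEmpty, _ => true
  | Sp _ _, SpEmpty => false
  | Sp a1 l1, Sp a2 l2 =>
      [|| [&& (l1 <= l2)%N, (l2 < n.-1)%N & ival a1 0 l1 \subset ival a2 0 l2],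
          (l2 == n.-1) && (ival a1 1 l1 \subset ival a2 1 l2)
        | l2 == n]
  end.

Definition vec_has_span (al : 'I_n -> F) (a : 'I_n) (l : nat) : Prop :=
  if (n <= l)%N then True
  else forall i, al i != 0 -> i \in ival a 0 l.

Definition cycle_has_span (T : trellis F n) (s : span)
    (v : forall i : 'I_n, 'rV[F]_(vdim T i)) (al : 'I_n -> F) : Prop :=
  match s with
  | SpEmpty => (forall i, v i = 0) /\ (forall i, al i = 0)
  | Sp a l =>
      if (n <= l)%N then True
      else (forall i, v i != 0 -> i \in ival a 1 l) /\
           (forall i, al i != 0 -> i \in ival a 0 l)
  end.

Definition has_min_span (T : trellis F n) (v : forall i : 'I_n, 'rV[F]_(vdim T i))
    (al : 'I_n -> F) (s : span) : Prop :=
  cycle_has_span T s v al /\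
  forall s', valid_span s' -> cycle_has_span T s' v al -> span_le s s'.

Definition comb_st (T : trellis F n) (r : nat)
    (vs : 'I_r -> forall i : 'I_n, 'rV[F]_(vdim T i)) (k : 'I_r -> F) :
    forall i : 'I_n, 'rV[F]_(vdim T i) :=
  fun i => \sum_(j < r) k j *: vs j i.

Definition comb_lab (r : nat) (als : 'I_r -> 'I_n -> F) (k : 'I_r -> F) :
    'I_n -> F :=
  fun i => \sum_(j < r) k j * als j i.

Definition product_basis (T : trellis F n) (r : nat)
    (vs : 'I_r -> forall i : 'I_n, 'rV[F]_(vdim T i)) (als : 'I_r -> 'I_n -> F) :
    Prop :=
  (forall j, is_cycle T (vs j) (als j)) /\
  (forall k : 'I_r -> F,
      (forall i, comb_st T r vs k i = 0) -> (forall i, comb_lab r als k i = 0) ->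
      forall j, k j = 0) /\
  (forall v al, is_cycle T v al ->
      exists k, (forall i, v i = comb_st T r vs k i) /\ (forall i, al i = comb_lab r als k i)) /\
  (* B ∩ S_s spans S_s for every span s *)
  (forall s, valid_span s -> forall v al, is_cycle T v al -> cycle_has_span T s v al ->
      exists k : 'I_r -> F,
        (forall j, k j != 0 -> cycle_has_span T s (vs j) (als j)) /\
        (forall i, v i = comb_st T r vs k i) /\ (forall i, al i = comb_lab r als k i)).

Definition trellis_iso (T T' : trellis F n) : Prop :=
  exists f : forall i : 'I_n, 'rV[F]_(vdim T i) -> 'rV[F]_(vdim T' i),
    (forall i (c : F) x y, f i (c *: x + y) = c *: f i x + f i y) /\
    (forall i, bijective (f i)) /\
    (forall i x al y,
        ((x, al, y) \in edges T i) = ((f i x, al, f (ordS i) y) \in edges T' i)).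

(* product of trellises; V_i(T) x V_i(T') is represented as 'rV_(d_i + d'_i) *)
Definition trellis_prod (T1 T2 : trellis F n) : trellis F n :=
  Trellis (fun i => (vdim T1 i + vdim T2 i)%N)
    (fun i => [set (row_mx e1.1.1 e2.1.1, e1.1.2 + e2.1.2, row_mx e1.2 e2.2)
               | e1 in edges T1 i, e2 in edges T2 i]).

Definition trivial_trellis : trellis F n :=
  Trellis (fun _ => 0%N) (fun i => [set (0, 0, 0)]).

Definition elem_dim (a : 'I_n) (l : nat) (i : 'I_n) : nat :=
  if i \in ival a 1 l then 1%N else 0%N.

Definition elem_trellis (al : 'I_n -> F) (a : 'I_n) (l : nat) : trellis F n :=
  Trellis (elem_dim a l)
    (fun i => [set ((c *: const_mx 1 : 'rV[F]_(elem_dim a l i)), c * al i,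
                    (c *: const_mx 1 : 'rV[F]_(elem_dim a l (ordS i)))) | c : F]).

Definition elem_product (r : nat) (als : 'I_r -> 'I_n -> F) (a : 'I_r -> 'I_n)
    (l : 'I_r -> nat) : trellis F n :=
  foldr (fun j T => trellis_prod (elem_trellis (als j) (a j) (l j)) T)
        trivial_trellis (enum 'I_r).

End Trellis.

Arguments ival {n}.
Arguments linear_trellis {F n}.
Arguments trim {F n}.
Arguments is_cycle {F n}.
Arguments reduced {F n}.
Arguments SpEmpty {n}.
Arguments Sp {n}.
Arguments valid_span {n}.
Arguments span_le {n}.
Arguments vec_has_span {F n}.
Arguments cycle_has_span {F n}.
Arguments has_min_span {F n}.
Arguments comb_st {F n} T {r}.
Arguments comb_lab {F n r}.
Arguments product_basis {F n} T {r}.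
Arguments trellis_iso {F n}.
Arguments trellis_prod {F n}.
Arguments trivial_trellis {F n}.
Arguments elem_dim {n}.
Arguments elem_trellis {F n}.
Arguments elem_product {F n r}.

(* The elementary product P has coordinates k : 'I_r -> F: its vertex at time i
   records k_j for the factors j active at i, and its cycles are exactly the
   combinations of one canonical cycle per factor, the j-th having minimum span
   (a_j, l_j). Since isomorphisms carry product bases and minimum spans along,
   this gives the forward direction.
   Conversely, let (v^j, alpha^j) be a product basis with these minimum spans.
   A combination sum_j k_j v^j vanishing at time i has span (i, i+n-1], hence is
   a combination of basis cycles of that span, i.e. of cycles inactive at i; so
   sum_j k_j v^j_i = 0 iff k_j = 0 for every j active at i. Thus the vertex spaces
   of T and of P are the same quotients of F^r, and in both trellises the edges
   are the time-i slices of the combinations of the basis; this identifies T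
   with P. *)

From HB Require Import structures.
From mathcomp Require Import all_boot all_order all_algebra.
From mathcomp Require Import zify.
From Stdlib Require Import ClassicalEpsilon.
Import GRing.Theory.
Local Open Scope ring_scope.
Set Implicit Arguments.
Unset Strict Implicit.

Section CyclicIntervals.
Local Open Scope nat_scope.
Variable n : nat.
Implicit Types (a b i t : 'I_n.+1) (s j lo hi l m : nat).

Definition cshift a s : 'I_n.+1 := inord ((a + s) %% n.+1).
Definition coffset a i : nat := (i + n.+1 - a) %% n.+1.

Lemma cshiftE a s : cshift a s = (a + s) %% n.+1 :> nat.
Proof. by rewrite inordK // ltn_pmod. Qed.

Lemma coffset_lt a i : coffset a i < n.+1.
Proof. exact: ltn_pmod. Qed.

Lemma coffset_cshift a b s : coffset b (cshift a s) = (coffset b a + s) %% n.+1.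
Proof.
rewrite /coffset cshiftE; have /ltnW hb := ltn_ord b.
by rewrite -!addnBA // modnDml modnDml addnAC.
Qed.

Lemma cshiftK a s : s < n.+1 -> coffset a (cshift a s) = s.
Proof.
by move=> hs; rewrite coffset_cshift /coffset addKn modnn add0n modn_small.
Qed.

Lemma coffsetK a i : cshift a (coffset a i) = i.
Proof.
apply: val_inj => /=; rewrite cshiftE /coffset modnDmr.
have ha := ltn_ord a; have hi := ltn_ord i.
have -> : a + (i + n.+1 - a) = i + n.+1 by lia.
by rewrite modnDr modn_small.
Qed.

Lemma ordS_cshift a s : ordS (cshift a s) = cshift a s.+1.
Proof.
by apply: val_inj => /=; rewrite !cshiftE -[(_ %% _).+1]addn1 modnDml addn1 addnS.
Qed.

Lemma cshift0 a : cshift a 0 = a.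
Proof. by apply: val_inj => /=; rewrite cshiftE addn0 modn_small. Qed.

Lemma cshiftn a : cshift a n.+1 = a.
Proof. by apply: val_inj => /=; rewrite cshiftE modnDr modn_small. Qed.

Lemma ordS_cshift1 a : ordS a = cshift a 1.
Proof. by rewrite -{1}(cshift0 a) ordS_cshift. Qed.

Lemma ivalP a i lo hi :
  reflect (exists2 j, lo <= j <= hi & i = cshift a j) (i \in ival a lo hi).
Proof.
rewrite inE; apply: (iffP existsP) => [[j /andP[hj /eqP ei]]|[j /andP[h1 h2] ->]].
  exists j; first by rewrite hj -ltnS ltn_ord.
  by apply: val_inj; rewrite /= cshiftE.
have hj : j < hi.+1 by rewrite ltnS.
by exists (Ordinal hj); rewrite /= h1; apply/eqP; rewrite cshiftE.
Qed.

Lemma mem_ival a i lo hi : hi < n.+1 ->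
  (i \in ival a lo hi) = (lo <= coffset a i <= hi).
Proof.
move=> hh; apply/ivalP/idP => [[j hj ->]|hoff].
  by rewrite cshiftK //; case/andP: hj => _ /leq_ltn_trans; apply.
by exists (coffset a i); rewrite ?coffsetK.
Qed.

Lemma cshift_ival a lo hi j : lo <= j <= hi -> cshift a j \in ival a lo hi.
Proof. by move=> hj; apply/ivalP; exists j. Qed.

Lemma ordS_ival a l : 0 < l -> ordS a \in ival a 1 l.
Proof. by move=> hl; rewrite ordS_cshift1 cshift_ival. Qed.

Lemma ival_full a i : i \in ival a 1 n.+1.
Proof.
rewrite -(coffsetK a i); case: (posnP (coffset a i)) => [->|hpos].
  by rewrite cshift0 -{1}(cshiftn a) cshift_ival ?leqnn.
by apply: cshift_ival; rewrite hpos ltnW ?coffset_lt.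
Qed.

Lemma ival_self a m : m < n.+1 -> a \notin ival a 1 m.
Proof. by move=> hm; rewrite mem_ival // -{2}(cshift0 a) cshiftK. Qed.

Lemma ival_but i t : t != i -> t \in ival i 1 n.
Proof.
move=> ht; rewrite mem_ival // -[_ <= n]ltnS coffset_lt andbT lt0n.
by apply: contraNneq ht => e; rewrite -(coffsetK i t) e cshift0.
Qed.

Lemma ival_all i t : t \in ival i 0 n.
Proof. by rewrite mem_ival // -[_ <= n]ltnS coffset_lt. Qed.

Lemma ival_point a i : i \in ival a 0 0 -> i = a.
Proof. by rewrite mem_ival // leqn0 => /eqP e; rewrite -(coffsetK a i) e cshift0. Qed.

Lemma ival_open_closed a l : {subset ival a 1 l <= ival a 0 l}.
Proof. by move=> i /ivalP[j /andP[_ hj] ->]; apply: cshift_ival. Qed.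

Lemma ival_closed_open a l i : 0 < l ->
  i \in ival a 0 l -> (i \in ival a 1 l) \/ (ordS i \in ival a 1 l).
Proof.
move=> hl /ivalP[[|j] /andP[_ hj] ->]; last by left; apply: cshift_ival.
by right; rewrite cshift0 ordS_ival.
Qed.

Lemma ival_ordS b m i : m < n.+1 -> ordS i \in ival b 1 m -> i \in ival b 0 m.
Proof.
move=> hm /ivalP[[//|j] /andP[_ hj] e].
by move: e; rewrite -ordS_cshift => /ordS_inj ->; rewrite cshift_ival // leq0n ltnW.
Qed.

(* An arc (a, a+l] inside a proper arc (b, b+m] cannot wrap around b. *)
Lemma ival_subset a b l m : 0 < l -> l < n.+1 -> m < n ->
  {subset ival a 1 l <= ival b 1 m} ->
  l <= m /\ {subset ival a 0 l <= ival b 0 m}.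
Proof.
move=> hl ln mn sub.
have hs s : 0 < s <= l -> 0 < (coffset b a + s) %% n.+1 <= m.
  move=> hsl; have := sub _ (cshift_ival a hsl).
  by rewrite mem_ival ?coffset_cshift //; lia.
have hc := coffset_lt b a; set c := coffset b a in hs hc.
have hcl : c + l < n.+1.
  rewrite ltnNge; apply/negP => hge.
  have := hs (n.+1 - c) ltac:(lia).
  by rewrite (_ : c + (n.+1 - c) = n.+1) ?modnn //; lia.
have := hs l ltac:(lia); rewrite modn_small // => hl'.
split; first by lia.
move=> i; rewrite !mem_ival //; try lia.
move=> /andP[_ hi]; rewrite -(coffsetK a i) coffset_cshift -/c modn_small; lia.
Qed.

Lemma arc_constant (T : Type) (K : 'I_n.+1 -> T) b m :
  (forall t, ordS t \in ival b 1 m -> K (ordS t) = K t) ->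
  forall t, t \in ival b 1 m -> K t = K b.
Proof.
move=> step t /ivalP[s /andP[s1 sm] ->]; elim: s s1 sm => [//|s IH] _ sm.
rewrite -ordS_cshift step; last by rewrite ordS_cshift cshift_ival.
by case: s IH sm => [|s] IH sm; [rewrite cshift0 | apply: IH => //; apply: ltnW].
Qed.

Lemma span_le_ival a b l m : l <= n.+1 -> m <= n.+1 ->
  {subset ival a 1 l <= ival b 1 m} -> (l = 0 -> a \in ival b 0 m) ->
  span_le (Sp a l) (Sp b m).
Proof.
move=> ln mn sub hpt; rewrite /span_le /=.
case: (eqVneq m n.+1) => [->|mn1]; first by rewrite !orbT.
have {}mn : m < n.+1 by lia.
case: (eqVneq l n.+1) => [el|ln1].
  by move: (sub b); rewrite el ival_full (negPf (ival_self b mn)) => /(_ isT).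
case: (eqVneq m n) => [em|mn2].
  by rewrite em in sub *; apply/orP; right; apply/orP; left; apply/subsetP.
have {}mn : m < n by lia.
rewrite mn /=; apply/orP; left.
case: (posnP l) => [l0|lpos].
  by rewrite l0 /=; apply/subsetP => i /ival_point ->; apply: hpt.
have [lm sub0] := ival_subset lpos ltac:(lia) mn sub.
by rewrite lm; apply/subsetP.
Qed.

Lemma span_le_but a l i : span_le (Sp a l) (Sp i n) -> i \notin ival a 1 l.
Proof.
rewrite /span_le /= ltnn andbF /= eqxx /= => /orP[/subsetP sub|].
  by apply: contraNN (ival_self i (ltnSn n)); apply: sub.
by rewrite eqn_leq ltnn andbF.
Qed.

End CyclicIntervals.

Section CycleSpans.
Variables (F : finFieldType) (n : nat).

Lemma cycle_has_span_supp (T1 T2 : trellis F n) s v w al :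
  (forall i, (v i == 0) = (w i == 0)) ->
  cycle_has_span T1 s v al <-> cycle_has_span T2 s w al.
Proof.
move=> vw; case: s => [|a l] /=.
  by split=> -[hv hal]; split=> // i; apply/eqP; rewrite (vw, =^~ vw) hv.
by case: ifP => // _; split=> -[hv hal]; split=> // i; rewrite (vw, =^~ vw); apply: hv.
Qed.

Lemma has_min_span_supp (T1 T2 : trellis F n) s v w al :
  (forall i, (v i == 0) = (w i == 0)) ->
  has_min_span T1 v al s <-> has_min_span T2 w al s.
Proof.
move=> vw; rewrite /has_min_span (cycle_has_span_supp _ _ vw).
by split=> -[hs hmin]; split=> // s' hs' /(cycle_has_span_supp _ _ vw); apply: hmin.
Qed.

End CycleSpans.

Lemma cycle_has_span_at (F : finFieldType) n (T : trellis F n.+1) v al i :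
  v i = 0 -> cycle_has_span T (Sp i n) v al.
Proof.
move=> vi0; rewrite /= ltnn; split=> t ht; last exact: ival_all.
by apply: ival_but; apply: contraNneq ht => ->; rewrite vi0.
Qed.

Section Combinations.
Variables (F : finFieldType) (n : nat) (T : trellis F n) (r : nat).
Variables (vs : 'I_r -> forall i, 'rV[F]_(vdim T i)) (als : 'I_r -> 'I_n -> F).

Lemma comb_stD c k k' i :
  comb_st T vs (fun j => c * k j + k' j) i = c *: comb_st T vs k i + comb_st T vs k' i.
Proof.
rewrite /comb_st scaler_sumr -big_split /=; apply: eq_bigr => j _.
by rewrite scalerDl scalerA.
Qed.

Lemma comb_stB k k' i :
  comb_st T vs (fun j => k j - k' j) i = comb_st T vs k i - comb_st T vs k' i.
Proof. by rewrite /comb_st -sumrB; apply: eq_bigr => j _; rewrite scalerBl. Qed.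

Lemma comb_labB k k' i :
  comb_lab als (fun j => k j - k' j) i = comb_lab als k i - comb_lab als k' i.
Proof. by rewrite /comb_lab -sumrB; apply: eq_bigr => j _; rewrite mulrBl. Qed.

Hypothesis hlin : linear_trellis T.

Lemma comb_is_cycle k :
  (forall j, is_cycle T (vs j) (als j)) -> is_cycle T (comb_st T vs k) (comb_lab als k).
Proof.
move=> hcyc i; have [e0 eD] := hlin i.
apply: (big_rec3 (fun x y z => (x, y, z) \in edges T i)) => // j x y z _.
exact: eD (hcyc j i).
Qed.

Hypotheses (hred : reduced T) (hB : product_basis T vs als).

(* In a reduced trellis every edge lies on a cycle, hence on a basis combination. *)
Lemma edges_comb i x al y :
  (x, al, y) \in edges T i <->
  exists k, [/\ x = comb_st T vs k i, al = comb_lab als k i & y = comb_st T vs k (ordS i)].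
Proof.
have [hcyc [_ [hspan _]]] := hB; split.
  move=> /hred[v [al' [/hspan[k [hv hal]] [<- <- <-]]]].
  by exists k; rewrite hv hal hv.
by move=> [k [-> -> ->]]; apply: comb_is_cycle.
Qed.

Lemma comb_st_surj i x : trim T -> exists k, comb_st T vs k i = x.
Proof.
case=> [hout _]; have [al [y /edges_comb[k [-> _ _]]]] := hout i x.
by exists k.
Qed.

End Combinations.

Section IsoTransport.
Variables (F : finFieldType) (n : nat) (T1 T2 : trellis F n).
Variables (f : forall i, 'rV[F]_(vdim T1 i) -> 'rV[F]_(vdim T2 i))
          (g : forall i, 'rV[F]_(vdim T2 i) -> 'rV[F]_(vdim T1 i)).
Arguments f : clear implicits.
Arguments g : clear implicits.
Hypothesis f_lin : forall i c x y, f i (c *: x + y) = c *: f i x + f i y.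
Hypotheses (fK : forall i, cancel (f i) (g i)) (gK : forall i, cancel (g i) (f i)).
Hypothesis f_edges : forall i x al y,
  ((x, al, y) \in edges T1 i) = ((f i x, al, f (ordS i) y) \in edges T2 i).

Lemma iso_inv_lin i c x y : g i (c *: x + y) = c *: g i x + g i y.
Proof. by rewrite -[x]gK -[y]gK -f_lin !fK. Qed.

Lemma iso_inv0 i : g i 0 = 0.
Proof.
have := @iso_inv_lin i 1 0 0; rewrite !scale1r addr0 => e.
by apply: (@addrI _ (g i 0)); rewrite addr0 -e.
Qed.

Lemma iso_inv_eq0 i x : (g i x == 0) = (x == 0).
Proof. by rewrite -{1}(iso_inv0 i) (can_eq (@gK i)). Qed.

Lemma is_cycle_iso v al : is_cycle T1 v al -> is_cycle T2 (fun i => f i (v i)) al.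
Proof. by move=> hv i; rewrite -f_edges; apply: hv. Qed.

Lemma is_cycle_iso_inv w al : is_cycle T2 w al -> is_cycle T1 (fun i => g i (w i)) al.
Proof. by move=> hw i; rewrite f_edges !gK; apply: hw. Qed.

Lemma comb_st_iso_inv r (ws : 'I_r -> forall i, 'rV[F]_(vdim T2 i)) k i :
  comb_st T1 (fun j i => g i (ws j i)) k i = g i (comb_st T2 ws k i).
Proof.
apply: (big_rec2 (fun x y => x = g i y)) => [|j x y _ ->]; first by rewrite iso_inv0.
by rewrite iso_inv_lin.
Qed.

Lemma product_basis_iso_inv r (ws : 'I_r -> forall i, 'rV[F]_(vdim T2 i)) als :
  product_basis T2 ws als -> product_basis T1 (fun j i => g i (ws j i)) als.
Proof.
have f_eq0 i x : (x == 0) = (f i x == 0) by rewrite -iso_inv_eq0 fK.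
move=> [hcyc [hind [hspan hsub]]]; split; [|split; [|split]].
- by move=> j; apply: is_cycle_iso_inv.
- move=> k hk; apply: hind => i; apply/eqP.
  by rewrite -iso_inv_eq0 -comb_st_iso_inv hk.
- move=> v al /is_cycle_iso /hspan[k [hv hal]].
  by exists k; split=> // i; rewrite comb_st_iso_inv -hv fK.
- move=> s hs v al hc /(cycle_has_span_supp _ _ (fun i => f_eq0 i (v i))) hsv.
  have [k [hk [hv hal]]] := hsub s hs _ _ (is_cycle_iso hc) hsv.
  exists k; split=> [j /hk|]; last by split=> // i; rewrite comb_st_iso_inv -hv fK.
  by apply: (proj1 (cycle_has_span_supp _ _ _)) => i; rewrite iso_inv_eq0.
Qed.

Lemma has_min_span_iso_inv w al s :
  has_min_span T2 w al s -> has_min_span T1 (fun i => g i (w i)) al s.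
Proof. by apply: (proj1 (has_min_span_supp _ _ _)) => i; rewrite iso_inv_eq0. Qed.

End IsoTransport.

Section ParametrizedIso.
Variables (F : finFieldType) (n r : nat) (T1 T2 : trellis F n).
Variables (lab : ('I_r -> F) -> 'I_n -> F)
          (p : forall i, ('I_r -> F) -> 'rV[F]_(vdim T1 i))
          (q : forall i, ('I_r -> F) -> 'rV[F]_(vdim T2 i)).
Hypothesis p_lin : forall i c k k', p i (fun j => c * k j + k' j) = c *: p i k + p i k'.
Hypothesis q_lin : forall i c k k', q i (fun j => c * k j + k' j) = c *: q i k + q i k'.
Hypotheses (p_surj : forall i x, exists k, p i k = x) (q_surj : forall i y, exists k, q i k = y).
Hypothesis pq_eq : forall i k k', p i k = p i k' <-> q i k = q i k'.
Hypothesis p_edges : forall i x al y, (x, al, y) \in edges T1 i <->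
  exists k, [/\ x = p i k, al = lab k i & y = p (ordS i) k].
Hypothesis q_edges : forall i x al y, (x, al, y) \in edges T2 i <->
  exists k, [/\ x = q i k, al = lab k i & y = q (ordS i) k].

(* Two trellises whose vertices and edges are images of the same coefficient
   space, with the same kernels, are isomorphic through x = p k |-> q k. *)
Lemma trellis_iso_param : trellis_iso T1 T2.
Proof.
pose pinv i x := proj1_sig (constructive_indefinite_description _ (@p_surj i x)).
pose qinv i y := proj1_sig (constructive_indefinite_description _ (@q_surj i y)).
have pinvK i x : p i (pinv i x) = x.
  by rewrite /pinv; case: constructive_indefinite_description.
have qinvK i y : q i (qinv i y) = y.
  by rewrite /qinv; case: constructive_indefinite_description.
have q_pinv i k : q i (pinv i (p i k)) = q i k by apply/pq_eq; rewrite pinvK.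
exists (fun i x => q i (pinv i x)); split; [|split].
- move=> i c x y; rewrite -q_lin; apply/pq_eq.
  by rewrite p_lin !pinvK.
- move=> i; exists (fun y => p i (qinv i y)) => [x|y]; last by rewrite q_pinv qinvK.
  by rewrite -[RHS]pinvK; apply/pq_eq; rewrite qinvK.
- move=> i x al y; apply/idP/idP.
    by case/p_edges=> k [-> -> ->]; apply/q_edges; exists k; rewrite !q_pinv.
  case/q_edges=> k [ex -> ey]; apply/p_edges; exists k.
  by split=> //; [rewrite -(pinvK i x) | rewrite -(pinvK _ y)]; apply/pq_eq.
Qed.

End ParametrizedIso.

Section ElementaryProduct.
Variables (F : finFieldType) (n r : nat).
Variables (alpha : 'I_r -> 'I_n -> F) (a : 'I_r -> 'I_n) (l : 'I_r -> nat).

Local Notation active j i := (i \in ival (a j) 1 (l j)).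

Definition elem_product_seq (s : seq 'I_r) : trellis F n :=
  foldr (fun j T => trellis_prod (elem_trellis (alpha j) (a j) (l j)) T) trivial_trellis s.

(* The vertex with coordinate k j in each factor j; a factor inactive at i
   contributes an empty block. *)
Fixpoint prod_vertex_seq (s : seq 'I_r) (i : 'I_n) (k : 'I_r -> F) :
    'rV[F]_(vdim (elem_product_seq s) i) :=
  match s return 'rV[F]_(vdim (elem_product_seq s) i) with
  | [::] => 0
  | j :: s' => row_mx (k j *: const_mx 1 : 'rV[F]_(elem_dim (a j) (l j) i))
                      (prod_vertex_seq s' i k)
  end.

Lemma const_row_eq (b : bool) (c c' : F) :
  (c *: const_mx 1 : 'rV[F]_(if b then 1 else 0)%N) = c' *: const_mx 1 <-> (b -> c = c').
Proof.
case: b; split=> //; last by rewrite !thinmx0.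
  by move=> /matrixP /(_ 0 0); rewrite !mxE !mulr1 => ->.
by move=> ->.
Qed.

Lemma const_row_surj (b : bool) (y : 'rV[F]_(if b then 1 else 0)%N) :
  exists c : F, y = c *: const_mx 1.
Proof.
case: b y => y; last by exists 0; rewrite !thinmx0.
by exists (y 0 0); apply/matrixP => i j; rewrite !mxE !ord1 mulr1.
Qed.

Lemma prod_vertex_seq_eq s i k k' :
  prod_vertex_seq s i k = prod_vertex_seq s i k' <->
  (forall j, j \in s -> active j i -> k j = k' j).
Proof.
elim: s => [|j s IH] /=; first by split.
split=> [/eq_row_mx[/const_row_eq ej /IH es] j'|e].
  by rewrite inE => /orP[/eqP->|/es]; [apply: ej | apply].
congr row_mx; last by apply/IH => j' js; apply: e; rewrite inE js orbT.
by apply/(const_row_eq (active j i)); apply: e; rewrite inE eqxx.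
Qed.

Lemma prod_vertex_seqD s i c k k' :
  prod_vertex_seq s i (fun j => c * k j + k' j) =
  c *: prod_vertex_seq s i k + prod_vertex_seq s i k'.
Proof.
elim: s => [|j s IH] /=; first by rewrite scaler0 addr0.
by rewrite IH scale_row_mx add_row_mx scalerA scalerDl.
Qed.

Lemma prod_vertex_seq0 s i : prod_vertex_seq s i (fun _ => 0) = 0.
Proof. by elim: s => //= j s ->; rewrite scale0r row_mx0. Qed.

Lemma prod_vertex_seq_surj s i y :
  uniq s -> exists k, prod_vertex_seq s i k = y.
Proof.
elim: s y => [|j s IH] y /=; first by exists (fun _ => 0); rewrite thinmx0.
move=> /andP[js us]; rewrite -(hsubmxK y).
have [c ->] := const_row_surj (lsubmx y); have [k <-] := IH (rsubmx y) us.
exists (fun j' => if j' == j then c else k j'); rewrite eqxx; congr row_mx.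
by apply/prod_vertex_seq_eq => j' j's _; case: eqP => // e; rewrite -e j's in js.
Qed.

Lemma edges_elem_product_seq s i x al y : uniq s ->
  (x, al, y) \in edges (elem_product_seq s) i <->
  exists k, [/\ x = prod_vertex_seq s i k, al = \sum_(j <- s) k j * alpha j i
              & y = prod_vertex_seq s (ordS i) k].
Proof.
elim: s x al y => [|j s IH] x al y /=.
  by move=> _; rewrite inE; split=> [/eqP[-> -> ->]|[k [-> -> ->]]];
    [exists (fun _ => 0) | ]; rewrite big_nil.
move=> /andP[js us]; split.
  case/imset2P=> [[[x1 al1] y1] [[x2 al2] y2] /imsetP[c _ [-> -> ->]]].
  move=> /(IH _ _ _ us)[k [-> -> ->]] [-> -> ->].
  pose k' j' := if j' == j then c else k j'.
  have kk' i' : prod_vertex_seq s i' k = prod_vertex_seq s i' k'.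
    by apply/prod_vertex_seq_eq => j' j's _; rewrite /k'; case: eqP => // e; rewrite -e j's in js.
  exists k'; rewrite /= !kk' big_cons /k' eqxx; split=> //; congr (_ + _).
  by apply: eq_big_seq => j' j's; case: eqP => // e; rewrite -e j's in js.
case=> k [-> -> ->]; rewrite big_cons; apply/imset2P.
apply: (Imset2spec (x1 := (k j *: const_mx 1, k j * alpha j i, k j *: const_mx 1))
                   (x2 := (prod_vertex_seq s i k, \sum_(j <- s) k j * alpha j i,
                           prod_vertex_seq s (ordS i) k))) => //.
  by apply/imsetP; exists (k j).
by apply/IH => //; exists k.
Qed.

Definition prod_vertex i k : 'rV[F]_(vdim (elem_product alpha a l) i) :=
  prod_vertex_seq (enum 'I_r) i k.

Lemma prod_vertex_eq i k k' :
  prod_vertex i k = prod_vertex i k' <-> (forall j, active j i -> k j = k' j).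
Proof.
rewrite /prod_vertex prod_vertex_seq_eq.
by split=> e j; [apply: e; rewrite mem_enum | move=> _; apply: e].
Qed.

Lemma prod_vertex_eq0 i k : prod_vertex i k = 0 <-> (forall j, active j i -> k j = 0).
Proof.
have z : prod_vertex i (fun _ => 0) = 0 by apply: prod_vertex_seq0.
by rewrite -z; apply: prod_vertex_eq.
Qed.

Lemma prod_vertexD i c k k' :
  prod_vertex i (fun j => c * k j + k' j) = c *: prod_vertex i k + prod_vertex i k'.
Proof. exact: prod_vertex_seqD. Qed.

Lemma prod_vertex_surj i (y : 'rV[F]_(vdim (elem_product alpha a l) i)) :
  exists k, prod_vertex i k = y.
Proof. exact/prod_vertex_seq_surj/enum_uniq. Qed.

Lemma edges_elem_product i x al y :
  (x, al, y) \in edges (elem_product alpha a l) i <->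
  exists k, [/\ x = prod_vertex i k, al = comb_lab alpha k i & y = prod_vertex (ordS i) k].
Proof.
have E k : \sum_(j <- enum 'I_r) k j * alpha j i = comb_lab alpha k i by rewrite enumT.
have Pedges := @edges_elem_product_seq (enum 'I_r) i x al y (enum_uniq _).
split=> [/Pedges[k [-> -> ->]]|[k [ex eal ey]]]; first by exists k; rewrite E.
by apply/Pedges; exists k; rewrite ex eal ey E.
Qed.

End ElementaryProduct.

Section CanonicalBasis.
Variables (F : finFieldType) (n r : nat).
Variables (alpha : 'I_r -> 'I_n.+1 -> F) (a : 'I_r -> 'I_n.+1) (l : 'I_r -> nat).
Hypotheses (l_le : forall j, (l j <= n.+1)%N)
           (alpha_span : forall j, vec_has_span (alpha j) (a j) (l j)).

Local Notation P := (elem_product alpha a l).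
Local Notation V := (prod_vertex alpha a l).
Local Notation active j i := (i \in ival (a j) 1 (l j)).

Lemma alpha_support0 j i : l j = 0%N -> alpha j i != 0 -> i = a j.
Proof.
move=> l0 hi; have := alpha_span j; rewrite /vec_has_span l0 => /(_ i hi).
exact: ival_point.
Qed.

Lemma alpha_support j i : (0 < l j)%N -> alpha j i != 0 -> active j i \/ active j (ordS i).
Proof.
move=> lpos hi; have := alpha_span j; rewrite /vec_has_span.
case: ifP => [ln _|_ /(_ i hi)]; last exact: ival_closed_open.
by left; rewrite (_ : l j = n.+1) ?ival_full //; apply/eqP; rewrite eqn_leq l_le.
Qed.

(* Along a cycle, each factor's coordinate is constant on its active arc. *)
Lemma elem_product_cycle w al : is_cycle P w al ->
  exists k, (forall i, w i = V i k) /\ (forall i, al i = comb_lab alpha k i).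
Proof.
move=> hw.
have hK i : {k | [/\ w i = V i k, al i = comb_lab alpha k i & w (ordS i) = V (ordS i) k]}.
  by apply: constructive_indefinite_description; apply/edges_elem_product; apply: hw.
pose K i := sval (hK i).
have [wK alK wSK] : [/\ forall i, w i = V i (K i), forall i, al i = comb_lab alpha (K i) i
                     & forall i, w (ordS i) = V (ordS i) (K i)].
  by split=> i; rewrite /K; case: (hK i) => ? [].
have step j t : active j (ordS t) -> K (ordS t) j = K t j.
  by move: (wSK t); rewrite wK => /prod_vertex_eq; apply.
have Kc j t : active j t -> K t j = K (a j) j.
  exact: (arc_constant (K := fun t => K t j) (step j)).
exists (fun j => K (a j) j); split=> [i|i].
  by rewrite wK; apply/prod_vertex_eq => j; apply: Kc.
rewrite alK; apply: eq_bigr => j _; case: (eqVneq (alpha j i) 0) => [->|hi].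
  by rewrite !mulr0.
congr (_ * _); case: (posnP (l j)) => [l0|lpos].
  by rewrite (alpha_support0 l0 hi).
by case: (alpha_support lpos hi) => [/Kc //|/[dup] /step <- /Kc].
Qed.

Hypothesis atom_sep : forall j1 j2, j1 != j2 -> l j1 = 0%N -> l j2 = 0%N -> a j1 != a j2.
Hypothesis atom_nz : forall j, l j = 0%N -> alpha j (a j) != 0.

Definition unit_coef (j : 'I_r) : 'I_r -> F := fun j' => (j' == j)%:R.

Definition canon_cycle j i := V i (unit_coef j).

Lemma comb_canon k i : comb_st P canon_cycle k i = V i k.
Proof.
have -> : comb_st P canon_cycle k i = V i (fun j' => \sum_(j < r) k j * unit_coef j j').
  rewrite /comb_st /canon_cycle; elim: (index_enum _) => [|j t IH].
    by rewrite big_nil; apply/esym/prod_vertex_eq0 => j' _; rewrite big_nil.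
  by rewrite big_cons IH -prod_vertexD; apply/prod_vertex_eq => j' _; rewrite big_cons.
apply/prod_vertex_eq => j' _; rewrite (bigD1 j') //= /unit_coef eqxx mulr1.
by rewrite big1 ?addr0 // => j hj; rewrite eq_sym (negPf hj) mulr0.
Qed.

Lemma comb_lab_unit j i : comb_lab alpha (unit_coef j) i = alpha j i.
Proof.
rewrite /comb_lab (bigD1 j) //= /unit_coef eqxx mul1r big1 ?addr0 //.
by move=> j' hj; rewrite (negPf hj) mul0r.
Qed.

Lemma canon_is_cycle j : is_cycle P (canon_cycle j) (alpha j).
Proof. by move=> i; apply/edges_elem_product; exists (unit_coef j); rewrite comb_lab_unit. Qed.

Lemma canon_cycle_eq0 j i : (canon_cycle j i == 0) = ~~ active j i.
Proof.
apply/eqP/idP => [/prod_vertex_eq0 h|hi]; last first.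
  by apply/prod_vertex_eq0 => j' hj'; rewrite /unit_coef; case: eqP => // e; rewrite -e hj' in hi.
by apply/negP => /h; rewrite /unit_coef eqxx; apply/eqP; apply: oner_neq0.
Qed.

(* The other factors of length 0 vanish at a j since they sit at other points. *)
Lemma comb_lab_atom k j : l j = 0%N ->
  (forall j', j' != j -> (0 < l j')%N -> k j' * alpha j' (a j) = 0) ->
  comb_lab alpha k (a j) = k j * alpha j (a j).
Proof.
move=> l0 hk; rewrite /comb_lab (bigD1 j) //= big1 ?addr0 // => j' hj'.
case: (posnP (l j')) => [l0'|]; last exact: hk.
apply/eqP; rewrite mulf_eq0; apply/orP; right; apply: contraTT (atom_sep hj' l0' l0).
by move=> /(alpha_support0 l0') ->; rewrite negbK.
Qed.

Lemma elem_coef_eq0 k : (forall i, V i k = 0) -> (forall i, comb_lab alpha k i = 0) ->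
  forall j, k j = 0.
Proof.
move=> hV hL.
have kpos j : (0 < l j)%N -> k j = 0.
  by move=> lpos; move/prod_vertex_eq0: (hV (ordS (a j))); apply; apply: ordS_ival.
move=> j; case: (posnP (l j)) => [l0|]; last exact: kpos.
have := hL (a j); rewrite (comb_lab_atom l0) => [/eqP|j' _ /kpos->]; last by rewrite mul0r.
by rewrite mulf_eq0 (negPf (atom_nz l0)) orbF => /eqP.
Qed.

Lemma canon_has_span k b m j : (m < n.+1)%N ->
  (forall i, V i k != 0 -> i \in ival b 1 m) ->
  (forall i, comb_lab alpha k i != 0 -> i \in ival b 0 m) ->
  k j != 0 -> cycle_has_span P (Sp b m) (canon_cycle j) (alpha j).
Proof.
move=> mn hV hL kj.
have act j' t : k j' != 0 -> active j' t -> t \in ival b 1 m.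
  by move=> kj' ht; apply: hV; apply: contraNneq kj' => /prod_vertex_eq0/(_ j' ht) ->.
have lab j' t : k j' != 0 -> (0 < l j')%N -> alpha j' t != 0 -> t \in ival b 0 m.
  move=> kj' lpos /(alpha_support lpos)[ht|ht]; last exact: ival_ordS mn (act j' _ kj' ht).
  exact: ival_open_closed (act j' _ kj' ht).
rewrite /= leqNgt mn /=; split=> [i|i hi]; first by rewrite canon_cycle_eq0 negbK; apply: act.
case: (posnP (l j)) => [l0|]; last by move/lab; apply.
rewrite (alpha_support0 l0 hi); apply: contraT => hout.
have := hL (a j); rewrite (negPf hout); apply.
rewrite (comb_lab_atom l0) ?mulf_neq0 ?atom_nz // => j' _ lpos.
apply/eqP; rewrite mulf_eq0; case: (eqVneq (k j') 0) => //= kj'.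
by apply: contraNT hout => /(lab j' _ kj' lpos).
Qed.

Lemma canon_product_basis : product_basis P canon_cycle alpha.
Proof.
split; [exact: canon_is_cycle | split; [|split]].
- by move=> k hk hl; apply: elem_coef_eq0 => // i; rewrite -comb_canon.
- move=> v al /elem_product_cycle[k [hv hal]].
  by exists k; split=> // i; rewrite comb_canon.
move=> s hs v al /elem_product_cycle[k [hv hal]] hsp.
exists k; split; last by split=> // i; rewrite comb_canon.
move=> j kj; case: s hs hsp => [_ [hv0 hal0]|b m _ hsp].
  case/negP: kj; apply/eqP; apply: elem_coef_eq0 => i; [rewrite -hv | rewrite -hal]; by [].
case: (leqP n.+1 m) => [nm|mn]; first by rewrite /= nm.
move: hsp; rewrite [cycle_has_span _ _ _ _]/= (ltn_geF mn) => -[hsv hsl].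
by apply: (canon_has_span mn _ _ kj) => i; [rewrite -hv; apply: hsv | rewrite -hal; apply: hsl].
Qed.

Lemma canon_min_span j : has_min_span P (canon_cycle j) (alpha j) (Sp (a j) (l j)).
Proof.
split.
  move: (alpha_span j); rewrite /vec_has_span /=; case: ifP => // _ hal.
  by split=> // i; rewrite canon_cycle_eq0 negbK.
case=> [_ [hv0 hal0]|b m hm].
  case: (posnP (l j)) => [l0|lpos]; first by move: (atom_nz l0); rewrite hal0 eqxx.
  by move: (hv0 (ordS (a j))) => /eqP; rewrite canon_cycle_eq0 ordS_ival.
case: (leqP n.+1 m) => [nm _|mn].
  have -> : m = n.+1 by apply/eqP; rewrite eqn_leq nm andbT.
  by rewrite /span_le eqxx !orbT.
rewrite [cycle_has_span _ _ _ _]/= (ltn_geF mn) => -[hsv hsl].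
apply: span_le_ival => // [i hi|l0]; last exact/hsl/atom_nz.
by apply: hsv; rewrite canon_cycle_eq0 negbK.
Qed.

Lemma product_basis_of_iso (T : trellis F n.+1) : trellis_iso T P ->
  exists vs : 'I_r -> forall i, 'rV[F]_(vdim T i),
    product_basis T vs alpha /\ forall j, has_min_span T (vs j) (alpha j) (Sp (a j) (l j)).
Proof.
case=> f [f_lin [f_bij f_edges]].
have hinv i : {g | cancel (f i) g /\ cancel g (f i)}.
  by apply: constructive_indefinite_description; case: (f_bij i) => g; exists g.
pose g i := sval (hinv i).
have fK i : cancel (f i) (g i) by rewrite /g; case: (hinv i) => ? [].
have gK i : cancel (g i) (f i) by rewrite /g; case: (hinv i) => ? [].
exists (fun j i => g i (canon_cycle j i)); split.
  exact: (product_basis_iso_inv f_lin fK gK f_edges (ws := canon_cycle) canon_product_basis).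
by move=> j; apply: (has_min_span_iso_inv f_lin fK gK (w := canon_cycle j) (canon_min_span j)).
Qed.

End CanonicalBasis.

Section ProductBasisIso.
Variables (F : finFieldType) (n r : nat) (T : trellis F n.+1).
Variables (alpha : 'I_r -> 'I_n.+1 -> F) (a : 'I_r -> 'I_n.+1) (l : 'I_r -> nat).
Variable vs : 'I_r -> forall i, 'rV[F]_(vdim T i).
Hypotheses (hlin : linear_trellis T) (l_le : forall j, (l j <= n.+1)%N).
Hypotheses (hB : product_basis T vs alpha)
           (hmin : forall j, has_min_span T (vs j) (alpha j) (Sp (a j) (l j))).

Local Notation active j i := (i \in ival (a j) 1 (l j)).

Lemma basis_vertex_inactive j i : ~~ active j i -> vs j i = 0.
Proof.
move=> hi; have [+ _] := hmin j; rewrite /=; case: ifP => [ln _|_ [hv _]].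
  by move: hi; rewrite (_ : l j = n.+1) ?ival_full //; apply/eqP; rewrite eqn_leq l_le.
by apply/eqP; apply: contraNT hi; apply: hv.
Qed.

Lemma comb_vertex_eq0 k i : comb_st T vs k i = 0 -> forall j, active j i -> k j = 0.
Proof.
move=> ki0; have [hcyc [hind [_ hsub]]] := hB.
have [k' [hk' [hv hal]]] := hsub (Sp i n) (leqnSn n) _ _ (comb_is_cycle hlin k hcyc)
  (cycle_has_span_at _ ki0).
have ekk j : k j = k' j.
  apply/eqP; rewrite -subr_eq0; apply/eqP; move: j; apply: hind => t.
    by rewrite comb_stB -hv subrr.
  by rewrite comb_labB -hal subrr.
move=> j hj; rewrite ekk; apply/eqP; apply: contraT => /hk'.
by move=> /(proj2 (hmin j) (Sp i n) (leqnSn n)) /span_le_but; rewrite hj.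
Qed.

Lemma comb_vertex_eq k k' i :
  comb_st T vs k i = comb_st T vs k' i <-> (forall j, active j i -> k j = k' j).
Proof.
split=> [e j hj|e].
  apply/eqP; rewrite -subr_eq0; apply/eqP.
  by apply: (comb_vertex_eq0 (k := fun j => k j - k' j) _ hj); rewrite comb_stB e subrr.
rewrite /comb_st; apply: eq_bigr => j _.
by case: (boolP (active j i)) => hj; [rewrite e | rewrite basis_vertex_inactive // !scaler0].
Qed.

Lemma iso_of_product_basis : trim T -> reduced T -> trellis_iso T (elem_product alpha a l).
Proof.
move=> htrim hred.
apply: (trellis_iso_param (lab := comb_lab alpha) (p := fun i k => comb_st T vs k i)
                          (q := prod_vertex alpha a l)).
- by move=> i c k k'; apply: comb_stD.
- exact: prod_vertexD.
- by move=> i x; apply: (comb_st_surj hlin hred hB x htrim).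
- exact: prod_vertex_surj.
- by move=> i k k'; apply: iff_trans (comb_vertex_eq k k' i) (iff_sym (prod_vertex_eq _ _ _ _ _ _)).
- exact: edges_comb hlin hred hB.
- exact: edges_elem_product.
Qed.

End ProductBasisIso.

Theorem mainTheorem3 (F : finFieldType) (n : nat) (T : trellis F n) (r : nat)
    (alpha : 'I_r -> 'I_n -> F) (a : 'I_r -> 'I_n) (l : 'I_r -> nat) :
  (0 < n)%N ->
  linear_trellis T -> trim T -> reduced T ->
  (forall j, (l j <= n)%N) ->
  (forall j, vec_has_span (alpha j) (a j) (l j)) ->
  (forall j1 j2, j1 != j2 -> l j1 = 0%N -> l j2 = 0%N -> a j1 != a j2) ->
  (* for alpha^j = 0 the trellis 0|(a,0) is trivial: its cycle has empty minimum span *)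
  (forall j, l j = 0%N -> alpha j (a j) != 0) ->
  (trellis_iso T (elem_product alpha a l) <->
   exists vs : 'I_r -> forall i : 'I_n, 'rV[F]_(vdim T i),
     product_basis T vs alpha /\
     forall j, has_min_span T (vs j) (alpha j) (Sp (a j) (l j))).
Proof.
case: n T alpha a l => [//|n] T alpha a l _ hlin htrim hred l_le alpha_span atom_sep atom_nz.
split; first exact: product_basis_of_iso.
by case=> vs [hB hmin]; apply: iso_of_product_basis hlin l_le hB hmin htrim hred.
Qed.
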